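(* Let $V$ and $Q$ be complex Hilbert spaces, $A\in L(V,V^* )$, $B\in L(V,Q^* )$, with associated sesquilinear forms $a(u,v)=\langle Au,v\rangle$ and $b(v,q)=\langle Bv,q\rangle$. Assume $\|a\|<\infty$ and $\alpha>0$, where $\|a\|$ and $\alpha$ are as defined in the context. Let $V_0=\ker B$, $V_1=V_0^\perp$ and let $A_{ij}\in L(V_j,V_i^* )$, $i,j\in\{0,1\}$, be defined by $\langle A_{ij}u,v\rangle=a(u,v)$ for all $u\in V_j$, $v\in V_i$ (so $A_{00}$ is an isomorphism from $V_0$ onto $V_0^*$). Then \[ \|A_{10}A_{00}^{-1}\|_{L(V_0^*,V_1^* )}\le\sqrt{\frac{\|a\|^2}{\alpha^2}-1},\qquad \|A_{00}^{-1}A_{01}\|_{L(V_1,V_0)}\le\sqrt{\frac{\|a\|^2}{\alpha^2}-1}, \] and \[ \|A_{11}-A_{10}A_{00}^{-1}A_{01}\|_{L(V_1,V_1^* )}\le\frac{\|a\|^2}{\alpha}. \]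
   Context: For a complex Hilbert space $H$, $H^*$ denotes the space of bounded antilinear functionals on $H$, $\langle\cdot,\cdot\rangle$ the duality pairing, and $L(H_1,H_2)$ the bounded linear operators. $V_0$, $V_1$ carry the inner product of $V$, and $V_i^*$ the corresponding dual norms. Definitions: $\|a\|=\sup_{0\ne u\in V}\sup_{0\ne v\in V}\frac{|a(u,v)|}{\|u\|_V\|v\|_V}$, $\alpha=\inf_{0\ne u\in\ker B}\sup_{0\ne v\in\ker B}\frac{|a(u,v)|}{\|u\|_V\|v\|_V}=\inf_{0\ne v\in\ker B}\sup_{0\ne u\in\ker B}\frac{|a(u,v)|}{\|u\|_V\|v\|_V}$ (both infima are assumed equal and positive). *)

From Stdlib Require Import Reals.
Open Scope R_scope.

Record Cx := mkC { Re : R; Im : R }.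
Definition C0 : Cx := mkC 0 0.
Definition C1 : Cx := mkC 1 0.
Definition Cadd (x y : Cx) : Cx := mkC (Re x + Re y) (Im x + Im y).
Definition Copp (x : Cx) : Cx := mkC (- Re x) (- Im x).
Definition Csub (x y : Cx) : Cx := Cadd x (Copp y).
Definition Cmul (x y : Cx) : Cx :=
  mkC (Re x * Re y - Im x * Im y) (Re x * Im y + Im x * Re y).
Definition Cconj (x : Cx) : Cx := mkC (Re x) (- Im x).
Definition Cmod (x : Cx) : R := sqrt (Re x ^ 2 + Im x ^ 2).

(** * Complex Hilbert spaces (inner product linear in the first argument,
      antilinear in the second, complete for the induced norm) *)
Record HilbertSpace := {
  carrier :> Type;
  hzero : carrier;
  hadd : carrier -> carrier -> carrier;
  hopp : carrier -> carrier;
  hscal : Cx -> carrier -> carrier;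
  hinner : carrier -> carrier -> Cx;
  hadd_assoc : forall x y z, hadd x (hadd y z) = hadd (hadd x y) z;
  hadd_comm : forall x y, hadd x y = hadd y x;
  hadd_0 : forall x, hadd x hzero = x;
  hadd_opp : forall x, hadd x (hopp x) = hzero;
  hscal_1 : forall x, hscal C1 x = x;
  hscal_assoc : forall a b x, hscal a (hscal b x) = hscal (Cmul a b) x;
  hscal_addv : forall a x y, hscal a (hadd x y) = hadd (hscal a x) (hscal a y);
  hscal_adds : forall a b x, hscal (Cadd a b) x = hadd (hscal a x) (hscal b x);
  hinner_add : forall x y z, hinner (hadd x y) z = Cadd (hinner x z) (hinner y z);
  hinner_scal : forall a x y, hinner (hscal a x) y = Cmul a (hinner x y);
  hinner_sym : forall x y, hinner x y = Cconj (hinner y x);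
  hinner_pos : forall x, 0 <= Re (hinner x x);
  hinner_def : forall x, hinner x x = C0 -> x = hzero;
  hcomplete : forall s : nat -> carrier,
    (forall eps, 0 < eps -> exists N, forall m n, (N <= m)%nat -> (N <= n)%nat ->
        sqrt (Re (hinner (hadd (s m) (hopp (s n))) (hadd (s m) (hopp (s n))))) < eps) ->
    exists l, forall eps, 0 < eps -> exists N, forall n, (N <= n)%nat ->
        sqrt (Re (hinner (hadd (s n) (hopp l)) (hadd (s n) (hopp l)))) < eps
}.
Arguments hzero {_}.
Arguments hadd {_}.
Arguments hopp {_}.
Arguments hscal {_}.
Arguments hinner {_}.

Definition hnorm {H : HilbertSpace} (x : H) : R := sqrt (Re (hinner x x)).

(** * Bounded operators V -> W^*, encoded by their forms (u, w) |-> <T u, w>: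
      linear in u, antilinear in w, and bounded. *)
Definition bounded_op {V W : HilbertSpace} (T : V -> W -> Cx) : Prop :=
  (forall u1 u2 w, T (hadd u1 u2) w = Cadd (T u1 w) (T u2 w)) /\
  (forall c u w, T (hscal c u) w = Cmul c (T u w)) /\
  (forall u w1 w2, T u (hadd w1 w2) = Cadd (T u w1) (T u w2)) /\
  (forall c u w, T u (hscal c w) = Cmul (Cconj c) (T u w)) /\
  (exists K, forall u w, Cmod (T u w) <= K * hnorm u * hnorm w).

Definition is_glb (E : R -> Prop) (m : R) : Prop :=
  (forall x, E x -> m <= x) /\ (forall b, (forall x, E x -> b <= x) -> b <= m).

Definition kerB {V Q : HilbertSpace} (B : V -> Q -> Cx) (v : V) : Prop :=
  forall q, B v q = C0.
Definition orth {V : HilbertSpace} (P : V -> Prop) (w : V) : Prop :=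
  forall v, P v -> hinner w v = C0.

Definition norm_a_set {V : HilbertSpace} (a : V -> V -> Cx) (r : R) : Prop :=
  exists u v, u <> hzero /\ v <> hzero /\ r = Cmod (a u v) / (hnorm u * hnorm v).

(** inf_{u in P} sup_{v in P} |a(u,v)|/(||u|| ||v||) *)
Definition infsup_set1 {V : HilbertSpace} (P : V -> Prop) (a : V -> V -> Cx) (s : R) : Prop :=
  exists u, P u /\ u <> hzero /\
    is_lub (fun r => exists v, P v /\ v <> hzero /\
                       r = Cmod (a u v) / (hnorm u * hnorm v)) s.
(** inf_{v in P} sup_{u in P} |a(u,v)|/(||u|| ||v||) *)
Definition infsup_set2 {V : HilbertSpace} (P : V -> Prop) (a : V -> V -> Cx) (s : R) : Prop :=
  exists v, P v /\ v <> hzero /\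
    is_lub (fun r => exists u, P u /\ u <> hzero /\
                       r = Cmod (a u v) / (hnorm u * hnorm v)) s.

(** [dual_le P f M] : the functional f on the closed subspace P satisfies
    the dual norm of f on P <= M, i.e. |f v| <= M ||v|| for all v in P. *)
Definition dual_le {V : HilbertSpace} (P : V -> Prop) (f : V -> Cx) (M : R) : Prop :=
  forall v, P v -> Cmod (f v) <= M * hnorm v.

Definition in_dual {V : HilbertSpace} (P : V -> Prop) (f : V -> Cx) : Prop :=
  (forall v1 v2, P v1 -> P v2 -> f (hadd v1 v2) = Cadd (f v1) (f v2)) /\
  (forall c v, P v -> f (hscal c v) = Cmul (Cconj c) (f v)) /\
  (exists M, dual_le P f M).

From Pilot Require Import Defs.
From Stdlib Require Import Reals Lra Classical.
Open Scope R_scope.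

(* Write n = ||a||, V0 = ker B, V1 = V0^perp.  The one geometric tool is a
   Bessel-type inequality for a bounded (anti)linear functional g of norm <= K:
   for orthogonal nonzero x, y,
       (|g x| / ||x||)^2 + (|g y| / ||y||)^2 <= K^2,
   obtained by testing g on a suitable combination of x and y.
   Combined with the inf-sup condition on V0 (which, for every beta < alpha,
   produces test vectors in V0 on which |a| exceeds beta times the norms) it
   gives two "Pythagorean" estimates, both of the shape
       alpha^2 (X^2 + Y^2) <= n^2 Y^2,
   first for X = ||u||, Y = ||w|| when u in V0 solves a(u,.) = a(w,.) on V0
   with w in V1, then for X = |a(u,z)|/||z||, Y = ||f|| when u in V0 solves
   a(u,.) = f on V0 and z in V1.  Each such estimate turns into
   X <= sqrt(n^2/alpha^2 - 1) Y, which are the first two bounds; the Schur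
   complement bound follows from ||w - u||^2 = ||w||^2 + ||u||^2. *)

Lemma Cx_eq (x y : Cx) : Re x = Re y -> Im x = Im y -> x = y.
Proof. destruct x, y; simpl; intros; subst; reflexivity. Qed.

Lemma Cmod_sq (z : Cx) : Cmod z ^ 2 = Re z ^ 2 + Im z ^ 2.
Proof. unfold Cmod. rewrite pow2_sqrt; nra. Qed.

Lemma Cmod_ge0 (z : Cx) : 0 <= Cmod z.
Proof. apply sqrt_pos. Qed.

Lemma Cmod_C0 : Cmod C0 = 0.
Proof.
  assert (E : Re C0 ^ 2 + Im C0 ^ 2 = 0) by (simpl; ring).
  unfold Cmod; rewrite E; apply sqrt_0.
Qed.

Lemma Cmod_real (T : R) : 0 <= T -> Cmod (mkC T 0) = T.
Proof.
  intros HT; unfold Cmod.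
  replace (Re (mkC T 0) ^ 2 + Im (mkC T 0) ^ 2) with (T ^ 2) by (simpl; ring).
  apply sqrt_pow2, HT.
Qed.

Lemma Cmod_conj (z : Cx) : Cmod (Cconj z) = Cmod z.
Proof. unfold Cmod; simpl. f_equal; ring. Qed.

Lemma Cx_eq0_of_double (z : Cx) : z = Cadd z z -> z = C0.
Proof.
  intros E. pose proof (f_equal Re E); pose proof (f_equal Im E); simpl in *.
  apply Cx_eq; simpl; lra.
Qed.

Section HilbertFacts.
Context {H : HilbertSpace}.

Lemma hinner_add_r (x y z : H) : hinner x (hadd y z) = Cadd (hinner x y) (hinner x z).
Proof.
  rewrite (hinner_sym _ x (hadd y z)), (hinner_sym _ x y), (hinner_sym _ x z), hinner_add.
  apply Cx_eq; simpl; ring.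
Qed.

Lemma hinner_scal_r (c : Cx) (x y : H) : hinner x (hscal c y) = Cmul (Cconj c) (hinner x y).
Proof.
  rewrite (hinner_sym _ x (hscal c y)), (hinner_sym _ x y), hinner_scal.
  apply Cx_eq; simpl; ring.
Qed.

Lemma hinner_self_Im (x : H) : Im (hinner x x) = 0.
Proof. pose proof (f_equal Im (hinner_sym _ x x)) as E; simpl in E; lra. Qed.

Lemma orth_sym (x y : H) : hinner x y = C0 -> hinner y x = C0.
Proof. intros E. rewrite hinner_sym, E. apply Cx_eq; simpl; lra. Qed.

Lemma hinner_orth_combination (x y : H) (s t : Cx) :
  hinner x y = C0 ->
  Re (hinner (hadd (hscal s x) (hscal t y)) (hadd (hscal s x) (hscal t y))) =
  (Re s ^ 2 + Im s ^ 2) * Re (hinner x x) + (Re t ^ 2 + Im t ^ 2) * Re (hinner y y).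
Proof.
  intros Hxy. pose proof (orth_sym _ _ Hxy) as Hyx.
  rewrite !hinner_add, !hinner_add_r, !hinner_scal, !hinner_scal_r, Hxy, Hyx.
  pose proof (hinner_self_Im x); pose proof (hinner_self_Im y).
  destruct (hinner x x), (hinner y y); simpl in *; subst. ring.
Qed.

Lemma hnorm_ge0 (x : H) : 0 <= hnorm x.
Proof. apply sqrt_pos. Qed.

Lemma hnorm_sq (x : H) : hnorm x ^ 2 = Re (hinner x x).
Proof. unfold hnorm. rewrite pow2_sqrt; [reflexivity | apply hinner_pos]. Qed.

Lemma hnorm_pos (x : H) : x <> hzero -> 0 < hnorm x.
Proof.
  intros Hx. unfold hnorm. apply sqrt_lt_R0.
  destruct (hinner_pos _ x) as [Hlt | Heq]; [exact Hlt |].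
  exfalso; apply Hx, hinner_def. apply Cx_eq; simpl; [lra | apply hinner_self_Im].
Qed.

Lemma hnorm_zero : hnorm (@hzero H) = 0.
Proof.
  assert (E : hinner (@hzero H) hzero = C0).
  { apply Cx_eq0_of_double. rewrite <- hinner_add, hadd_0. reflexivity. }
  unfold hnorm. rewrite E. apply sqrt_0.
Qed.

End HilbertFacts.

Lemma div_nonneg (a b : R) : 0 <= a -> 0 < b -> 0 <= a / b.
Proof. intros Ha Hb. apply Rmult_le_pos; [exact Ha | apply Rlt_le, Rinv_0_lt_compat, Hb]. Qed.

Lemma le_sq_of_le_mul_sqrt (T K : R) : 0 <= T -> T <= K * sqrt T -> T <= K ^ 2.
Proof.
  intros [HT | <-] Hle; [| nra].
  pose proof (sqrt_lt_R0 _ HT). pose proof (sqrt_sqrt T (Rlt_le _ _ HT)).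
  assert (sqrt T <= K) by nra. nra.
Qed.

Lemma sq_mul_le_of_below (alpha K L : R) : 0 < alpha -> 0 <= K ->
  (forall beta, 0 < beta -> beta < alpha -> beta ^ 2 * K <= L) -> alpha ^ 2 * K <= L.
Proof.
  intros Ha HK Hbelow. apply Rle_plus_epsilon. intros eps Heps.
  set (d := Rmin (alpha / 2) (eps / (2 * alpha * K + 1))).
  assert (Hd0 : 0 < d) by (apply Rmin_pos; [lra | apply Rdiv_lt_0_compat; nra]).
  assert (Hd1 : d <= alpha / 2) by apply Rmin_l.
  assert (Hd2 : d * (2 * alpha * K + 1) <= eps).
  { assert (Hd : d <= eps / (2 * alpha * K + 1)) by apply Rmin_r.
    apply (Rmult_le_compat_r (2 * alpha * K + 1)) in Hd; [| nra].
    replace (eps / (2 * alpha * K + 1) * (2 * alpha * K + 1)) with eps in Hd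
      by (field; nra). exact Hd. }
  assert (Hnear : (alpha - d) ^ 2 * K <= L) by (apply Hbelow; lra).
  nra.
Qed.

Lemma le_sqrt_ratio_of_pythagorean (n alpha X Y : R) : 0 < alpha -> 0 <= X -> 0 <= Y ->
  alpha ^ 2 * (X ^ 2 + Y ^ 2) <= n ^ 2 * Y ^ 2 ->
  X <= sqrt (n ^ 2 / alpha ^ 2 - 1) * Y.
Proof.
  intros Ha HX HY Hpyth.
  assert (HX2 : X ^ 2 <= (n ^ 2 / alpha ^ 2 - 1) * Y ^ 2).
  { apply (Rmult_le_reg_r (alpha ^ 2)); [nra |]. field_simplify; lra. }
  set (k := n ^ 2 / alpha ^ 2 - 1) in *.
  destruct HY as [HY | <-]; [| nra].
  assert (Hk : 0 <= k) by (apply (Rmult_le_reg_r (Y ^ 2)); nra).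
  pose proof (pow2_sqrt k Hk); pose proof (sqrt_pos k).
  assert (X ^ 2 <= (sqrt k * Y) ^ 2) by nra.
  assert (0 <= sqrt k * Y) by (apply Rmult_le_pos; lra).
  apply Rnot_lt_le; intros Hlt. nra.
Qed.

Lemma lt_mul_of_lt_div (beta a p : R) : 0 < p -> beta < a / p -> beta * p < a.
Proof.
  intros Hp Hlt. apply (Rmult_lt_compat_r p) in Hlt; [| exact Hp].
  replace (a / p * p) with a in Hlt by (field; lra). exact Hlt.
Qed.

Lemma rescale_pythagorean (b N m n q : R) : 0 < n -> 0 < q ->
  (b * n) ^ 2 + (b * m * n / q) ^ 2 <= (N * n) ^ 2 -> b ^ 2 * (m ^ 2 + q ^ 2) <= N ^ 2 * q ^ 2.
Proof.
  intros Hn Hq Hle.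
  apply (Rmult_le_compat_r (q ^ 2 / n ^ 2)) in Hle; [| apply Rlt_le, Rdiv_lt_0_compat; nra].
  replace (((b * n) ^ 2 + (b * m * n / q) ^ 2) * (q ^ 2 / n ^ 2))
    with (b ^ 2 * (m ^ 2 + q ^ 2)) in Hle by (field; lra).
  replace ((N * n) ^ 2 * (q ^ 2 / n ^ 2)) with (N ^ 2 * q ^ 2) in Hle by (field; lra).
  exact Hle.
Qed.

Lemma lub_approx (E : R -> Prop) (s beta : R) :
  is_lub E s -> beta < s -> exists r, E r /\ beta < r.
Proof.
  intros [_ Hleast] Hlt. apply NNPP. intros Hno.
  assert (s <= beta); [| lra].
  apply Hleast. intros r Er. apply Rnot_lt_le. intros Hr. apply Hno; eauto.
Qed.

(* A linear functional of norm <= K, evaluated on two orthogonal nonzero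
   vectors: the squared normalised values sum to at most K^2.  Test g on
   t = conj(g x)/||x||^2 x + conj(g y)/||y||^2 y, for which g t = ||t||^2. *)
Lemma functional_orth_bessel {V : HilbertSpace} (g : V -> Cx) (K : R) (x y : V) :
  (forall x1 x2, g (hadd x1 x2) = Cadd (g x1) (g x2)) ->
  (forall c x1, g (hscal c x1) = Cmul c (g x1)) ->
  (forall x1, Cmod (g x1) <= K * hnorm x1) ->
  hinner x y = C0 -> x <> hzero -> y <> hzero ->
  (Cmod (g x) / hnorm x) ^ 2 + (Cmod (g y) / hnorm y) ^ 2 <= K ^ 2.
Proof.
  intros Hadd Hscal Hbound Hxy Hx Hy.
  pose proof (hnorm_pos x Hx); pose proof (hnorm_pos y Hy).
  replace ((Cmod (g x) / hnorm x) ^ 2 + (Cmod (g y) / hnorm y) ^ 2)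
    with (Cmod (g x) ^ 2 / hnorm x ^ 2 + Cmod (g y) ^ 2 / hnorm y ^ 2) by (field; lra).
  rewrite !Cmod_sq, !hnorm_sq.
  assert (0 < Re (hinner x x)) by (rewrite <- hnorm_sq; nra).
  assert (0 < Re (hinner y y)) by (rewrite <- hnorm_sq; nra).
  set (nx := Re (hinner x x)) in *; set (ny := Re (hinner y y)) in *.
  set (a := g x); set (b := g y).
  set (T := (Re a ^ 2 + Im a ^ 2) / nx + (Re b ^ 2 + Im b ^ 2) / ny).
  set (t := hadd (hscal (mkC (Re a / nx) (- Im a / nx)) x)
                 (hscal (mkC (Re b / ny) (- Im b / ny)) y)).
  assert (HT0 : 0 <= T).
  { unfold T. apply Rplus_le_le_0_compat; apply div_nonneg; nra. }
  assert (Hgt : g t = mkC T 0).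
  { unfold t. rewrite Hadd, !Hscal. fold a b. apply Cx_eq; simpl; unfold T; field; lra. }
  assert (Hnt : Re (hinner t t) = T).
  { unfold t. rewrite hinner_orth_combination by exact Hxy. fold nx ny.
    simpl. unfold T. field; lra. }
  apply le_sq_of_le_mul_sqrt; [exact HT0 |].
  specialize (Hbound t). rewrite Hgt, Cmod_real in Hbound by exact HT0.
  unfold hnorm in Hbound. rewrite Hnt in Hbound. exact Hbound.
Qed.

(* The same inequality for antilinear functionals, by complex conjugation. *)
Lemma antifunctional_orth_bessel {V : HilbertSpace} (g : V -> Cx) (K : R) (x y : V) :
  (forall x1 x2, g (hadd x1 x2) = Cadd (g x1) (g x2)) ->
  (forall c x1, g (hscal c x1) = Cmul (Cconj c) (g x1)) ->
  (forall x1, Cmod (g x1) <= K * hnorm x1) ->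
  hinner x y = C0 -> x <> hzero -> y <> hzero ->
  (Cmod (g x) / hnorm x) ^ 2 + (Cmod (g y) / hnorm y) ^ 2 <= K ^ 2.
Proof.
  intros Hadd Hscal Hbound.
  rewrite <- (Cmod_conj (g x)), <- (Cmod_conj (g y)).
  apply (functional_orth_bessel (fun x1 => Cconj (g x1))).
  - intros x1 x2. rewrite Hadd. apply Cx_eq; simpl; ring.
  - intros c x1. rewrite Hscal. apply Cx_eq; simpl; ring.
  - intros x1. rewrite Cmod_conj. apply Hbound.
Qed.

Lemma op_zero_l {V W : HilbertSpace} (T : V -> W -> Cx) :
  bounded_op T -> forall w, T hzero w = C0.
Proof. intros [Hadd _] w. apply Cx_eq0_of_double. rewrite <- Hadd, hadd_0. reflexivity. Qed.

Lemma op_zero_r {V W : HilbertSpace} (T : V -> W -> Cx) :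
  bounded_op T -> forall u, T u hzero = C0.
Proof. intros [_ [_ [Hadd _]]] u. apply Cx_eq0_of_double. rewrite <- Hadd, hadd_0. reflexivity. Qed.

Section SaddlePoint.
Variables (V Q : HilbertSpace) (A : V -> V -> Cx) (B : V -> Q -> Cx).
Variables (norma alpha : R).
Hypothesis HA : bounded_op A.
Hypothesis Hnorma : is_lub (norm_a_set A) norma.
Hypothesis Halpha1 : is_glb (infsup_set1 (kerB B) A) alpha.
Hypothesis Halpha2 : is_glb (infsup_set2 (kerB B) A) alpha.
Hypothesis Hpos : 0 < alpha.

Lemma form_bound (u v : V) : Cmod (A u v) <= norma * hnorm u * hnorm v.
Proof.
  destruct (classic (u = hzero)) as [-> | Hu].
  { rewrite (op_zero_l A HA), Cmod_C0, hnorm_zero. lra. }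
  destruct (classic (v = hzero)) as [-> | Hv].
  { rewrite (op_zero_r A HA), Cmod_C0, hnorm_zero. lra. }
  pose proof (hnorm_pos u Hu); pose proof (hnorm_pos v Hv).
  assert (Cmod (A u v) / (hnorm u * hnorm v) <= norma).
  { apply (proj1 Hnorma). exists u, v; auto. }
  replace (Cmod (A u v)) with (Cmod (A u v) / (hnorm u * hnorm v) * (hnorm u * hnorm v))
    by (field; lra).
  rewrite Rmult_assoc. apply Rmult_le_compat_r; nra.
Qed.

Lemma ratio_exceeds (phi : V -> R) (x0 : V) (beta : R) :
  kerB B x0 -> x0 <> hzero ->
  (forall x, x <> hzero -> phi x <= norma) ->
  (forall s, is_lub (fun r => exists x, kerB B x /\ x <> hzero /\ r = phi x) s -> alpha <= s) ->
  beta < alpha -> exists x, kerB B x /\ x <> hzero /\ beta < phi x.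
Proof.
  intros Hx0 Hx0nz Hbd Hsup Hbeta.
  destruct (completeness (fun r => exists x, kerB B x /\ x <> hzero /\ r = phi x))
    as [s Hs].
  { exists norma. intros r (x & _ & Hx & ->). auto. }
  { exists (phi x0), x0. auto. }
  destruct (lub_approx _ s beta Hs) as [r [(x & Hx & Hxnz & ->) Hr]];
    [specialize (Hsup s Hs); lra |].
  eauto.
Qed.

Lemma infsup_detect_left (u : V) (beta : R) : kerB B u -> u <> hzero -> beta < alpha ->
  exists v, kerB B v /\ v <> hzero /\ beta * hnorm u * hnorm v < Cmod (A u v).
Proof.
  intros Hu Hunz Hbeta.
  destruct (ratio_exceeds (fun v => Cmod (A u v) / (hnorm u * hnorm v)) u beta)
    as (v & Hv & Hvnz & Hr); auto.
  - intros v Hvnz. apply (proj1 Hnorma). exists u, v; auto.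
  - intros s Hs. apply (proj1 Halpha1). exists u; auto.
  - exists v; repeat split; auto.
    pose proof (hnorm_pos u Hunz); pose proof (hnorm_pos v Hvnz).
    rewrite Rmult_assoc. apply lt_mul_of_lt_div; [nra | exact Hr].
Qed.

Lemma infsup_detect_right (v : V) (beta : R) : kerB B v -> v <> hzero -> beta < alpha ->
  exists u, kerB B u /\ u <> hzero /\ beta * hnorm u * hnorm v < Cmod (A u v).
Proof.
  intros Hv Hvnz Hbeta.
  destruct (ratio_exceeds (fun u => Cmod (A u v) / (hnorm u * hnorm v)) v beta)
    as (u & Hu & Hunz & Hr); auto.
  - intros u Hunz. apply (proj1 Hnorma). exists u, v; auto.
  - intros s Hs. apply (proj1 Halpha2). exists v; auto.
  - exists u; repeat split; auto.
    pose proof (hnorm_pos u Hunz); pose proof (hnorm_pos v Hvnz).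
    rewrite Rmult_assoc. apply lt_mul_of_lt_div; [nra | exact Hr].
Qed.

(* alpha is a finite infimum, so the set it bounds is nonempty: V0 <> {0}. *)
Lemma kernel_nontrivial : exists y, kerB B y /\ y <> hzero.
Proof.
  apply NNPP; intros Hno.
  assert (alpha + 1 <= alpha); [| lra].
  apply (proj2 Halpha1). intros s (u & Hu & Hunz & _). exfalso; eauto.
Qed.

Lemma alpha_le_norma : alpha <= norma.
Proof.
  destruct kernel_nontrivial as [y [Hy Hynz]].
  apply Rnot_lt_le; intros Hlt.
  destruct (infsup_detect_left y norma Hy Hynz Hlt) as (v & _ & _ & Hv).
  pose proof (form_bound y v). lra.
Qed.

(* Key estimate for A00^{-1} A01: if w in V1 and u in V0 solve
   a(u,.) = a(w,.) on V0, then alpha^2 (||u||^2 + ||w||^2) <= ||a||^2 ||w||^2.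
   For v detecting u and y0 in V0 detecting v, apply Bessel to a(., v) on y0, w. *)
Lemma lift_pythagorean (w u : V) : orth (kerB B) w -> kerB B u ->
  (forall v, kerB B v -> A u v = A w v) ->
  alpha ^ 2 * (hnorm u ^ 2 + hnorm w ^ 2) <= norma ^ 2 * hnorm w ^ 2.
Proof.
  intros Hw Hu Heq.
  pose proof (hnorm_ge0 w); pose proof (hnorm_ge0 u).
  assert (alpha ^ 2 <= norma ^ 2) by (pose proof alpha_le_norma; nra).
  destruct (classic (u = hzero)) as [-> | Hunz].
  { rewrite hnorm_zero. nra. }
  pose proof (hnorm_pos u Hunz).
  apply sq_mul_le_of_below; [exact Hpos | nra |].
  intros beta Hbeta0 Hbeta.
  destruct (infsup_detect_left u beta Hu Hunz Hbeta) as (v & Hv & Hvnz & Huv).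
  rewrite Heq in Huv by exact Hv.
  pose proof (hnorm_pos v Hvnz).
  destruct (classic (w = hzero)) as [-> | Hwnz].
  { rewrite (op_zero_l A HA), Cmod_C0 in Huv.
    assert (0 < beta * hnorm u * hnorm v) by (apply Rmult_lt_0_compat; nra). lra. }
  pose proof (hnorm_pos w Hwnz).
  destruct (infsup_detect_right v beta Hv Hvnz Hbeta) as (y0 & Hy0 & Hy0nz & Hyv).
  pose proof (hnorm_pos y0 Hy0nz).
  assert (Hgbound : forall x, Cmod (A x v) <= norma * hnorm v * hnorm x)
    by (intros x; pose proof (form_bound x v); lra).
  destruct HA as (Hadd & Hscal & _).
  assert (Hbessel := functional_orth_bessel (fun x => A x v) (norma * hnorm v) y0 w
    (fun x1 x2 => Hadd x1 x2 v) (fun c x1 => Hscal c x1 v) Hgbound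
    (orth_sym _ _ (Hw y0 Hy0)) Hy0nz Hwnz).
  cbv beta in Hbessel.
  assert (beta * hnorm v <= Cmod (A y0 v) / hnorm y0).
  { apply Rlt_le, (Rmult_lt_reg_r (hnorm y0)); [lra |]. field_simplify; nra. }
  assert (beta * hnorm u * hnorm v / hnorm w <= Cmod (A w v) / hnorm w).
  { apply Rlt_le, (Rmult_lt_reg_r (hnorm w)); [lra |]. field_simplify; nra. }
  assert (Hsq : (beta * hnorm v) ^ 2 + (beta * hnorm u * hnorm v / hnorm w) ^ 2
                <= (norma * hnorm v) ^ 2).
  { assert (0 <= beta * hnorm u * hnorm v / hnorm w)
      by (apply div_nonneg; [apply Rmult_le_pos; nra | lra]).
    assert ((beta * hnorm v) ^ 2 <= (Cmod (A y0 v) / hnorm y0) ^ 2) by (apply pow_incr; nra).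
    assert ((beta * hnorm u * hnorm v / hnorm w) ^ 2 <= (Cmod (A w v) / hnorm w) ^ 2)
      by (apply pow_incr; lra).
    lra. }
  apply (rescale_pythagorean beta norma (hnorm u) (hnorm v) (hnorm w)); lra.
Qed.

(* Key estimate for A10 A00^{-1}: if u in V0 solves a(u,.) = f on V0 with
   ||f|| <= M, then for z in V1 nonzero, X = |a(u,z)|/||z|| satisfies
   alpha^2 (X^2 + M^2) <= ||a||^2 M^2.  Apply Bessel to a(u, .) on v, z,
   where v detects u, and note beta ||u|| <= |f v|/||v|| <= M. *)
Lemma extension_pythagorean (f : V -> Cx) (u z : V) (M : R) :
  kerB B u -> (forall v, kerB B v -> A u v = f v) -> dual_le (kerB B) f M ->
  orth (kerB B) z -> z <> hzero ->
  alpha ^ 2 * ((Cmod (A u z) / hnorm z) ^ 2 + M ^ 2) <= norma ^ 2 * M ^ 2.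
Proof.
  intros Hu Heq HM Hz Hznz.
  pose proof (hnorm_pos z Hznz).
  set (X := Cmod (A u z) / hnorm z).
  assert (HX0 : 0 <= X) by (apply div_nonneg; [apply Cmod_ge0 | lra]).
  apply sq_mul_le_of_below; [exact Hpos | nra |].
  intros beta Hbeta0 Hbeta.
  destruct (classic (u = hzero)) as [-> | Hunz].
  { unfold X. rewrite (op_zero_l A HA), Cmod_C0.
    pose proof alpha_le_norma. replace (0 / hnorm z) with 0 by (field; lra).
    assert (beta ^ 2 <= norma ^ 2) by nra. nra. }
  pose proof (hnorm_pos u Hunz).
  destruct (infsup_detect_left u beta Hu Hunz Hbeta) as (v & Hv & Hvnz & Huv).
  pose proof (hnorm_pos v Hvnz).
  assert (Hgbound : forall x, Cmod (A u x) <= norma * hnorm u * hnorm x)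
    by (intros x; apply form_bound).
  destruct HA as (_ & _ & Hadd & Hscal & _).
  assert (Hbessel := antifunctional_orth_bessel (A u) (norma * hnorm u) v z
    (Hadd u) (fun c x1 => Hscal c u x1) Hgbound
    (orth_sym _ _ (Hz v Hv)) Hvnz Hznz).
  fold X in Hbessel.
  assert (Hdetect : beta * hnorm u <= Cmod (A u v) / hnorm v).
  { apply Rlt_le, (Rmult_lt_reg_r (hnorm v)); [lra |]. field_simplify; nra. }
  assert (HfM : Cmod (A u v) / hnorm v <= M).
  { rewrite Heq by exact Hv. apply (Rmult_le_reg_r (hnorm v)); [lra |].
    replace (Cmod (f v) / hnorm v * hnorm v) with (Cmod (f v)) by (field; lra).
    pose proof (HM v Hv). lra. }
  assert ((beta * hnorm u) ^ 2 <= (Cmod (A u v) / hnorm v) ^ 2)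
    by (apply pow_incr; split; [apply Rmult_le_pos|]; lra).
  assert (Hu_le : (beta * hnorm u) ^ 2 <= M ^ 2)
    by (apply pow_incr; split; [apply Rmult_le_pos|]; lra).
  assert (HX2 : X ^ 2 <= (norma ^ 2 - beta ^ 2) * hnorm u ^ 2) by nra.
  assert (Hgap : 0 <= norma ^ 2 - beta ^ 2) by (pose proof alpha_le_norma; nra).
  assert (beta ^ 2 * X ^ 2 <= (norma ^ 2 - beta ^ 2) * M ^ 2).
  { apply Rle_trans with ((norma ^ 2 - beta ^ 2) * (beta * hnorm u) ^ 2); [nra |].
    apply Rmult_le_compat_l; assumption. }
  lra.
Qed.

Lemma coupling_extension_bound (f : V -> Cx) (u : V) (M : R) :
  kerB B u -> (forall v, kerB B v -> A u v = f v) -> dual_le (kerB B) f M ->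
  dual_le (orth (kerB B)) (A u) (sqrt (norma ^ 2 / alpha ^ 2 - 1) * M).
Proof.
  intros Hu Heq HM z Hz.
  assert (HM0 : 0 <= M).
  { destruct kernel_nontrivial as [y [Hy Hynz]].
    pose proof (HM y Hy); pose proof (Cmod_ge0 (f y)); pose proof (hnorm_pos y Hynz). nra. }
  destruct (classic (z = hzero)) as [-> | Hznz].
  { rewrite (op_zero_r A HA), Cmod_C0, hnorm_zero. lra. }
  pose proof (hnorm_pos z Hznz).
  assert (HX : Cmod (A u z) / hnorm z <= sqrt (norma ^ 2 / alpha ^ 2 - 1) * M).
  { apply le_sqrt_ratio_of_pythagorean; auto.
    - apply div_nonneg; [apply Cmod_ge0 | lra].
    - apply (extension_pythagorean f); auto. }
  apply (Rmult_le_compat_r (hnorm z)) in HX; [| lra].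
  replace (Cmod (A u z) / hnorm z * hnorm z) with (Cmod (A u z)) in HX by (field; lra).
  exact HX.
Qed.

Lemma coupling_lift_bound (w u : V) : orth (kerB B) w -> kerB B u ->
  (forall v, kerB B v -> A u v = A w v) ->
  hnorm u <= sqrt (norma ^ 2 / alpha ^ 2 - 1) * hnorm w.
Proof.
  intros Hw Hu Heq.
  apply le_sqrt_ratio_of_pythagorean; try apply hnorm_ge0; auto.
  apply lift_pythagorean; auto.
Qed.

(* Third bound: ||A11 - A10 A00^{-1} A01|| <= ||a||^2/alpha, since the Schur
   complement applied to w is a(w - u, .) and ||w - u|| <= (||a||/alpha) ||w||. *)
Lemma schur_complement_bound (w u : V) : orth (kerB B) w -> kerB B u ->
  (forall v, kerB B v -> A u v = A w v) ->
  dual_le (orth (kerB B)) (fun z => Csub (A w z) (A u z)) (norma ^ 2 / alpha * hnorm w).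
Proof.
  intros Hw Hu Heq z Hz.
  set (d := hadd (hscal Defs.C1 w) (hscal (mkC (-1) 0) u)).
  assert (Hd : Csub (A w z) (A u z) = A d z).
  { destruct HA as (Hadd & Hscal & _).
    unfold d. rewrite Hadd, !Hscal. apply Cx_eq; simpl; ring. }
  assert (Hdsq : hnorm d ^ 2 = hnorm u ^ 2 + hnorm w ^ 2).
  { rewrite !hnorm_sq. unfold d. rewrite hinner_orth_combination by (apply Hw, Hu).
    simpl. ring. }
  pose proof (lift_pythagorean w u Hw Hu Heq).
  pose proof alpha_le_norma.
  pose proof (hnorm_ge0 w); pose proof (hnorm_ge0 d); pose proof (hnorm_ge0 z).
  assert (Hdn : hnorm d <= norma / alpha * hnorm w).
  { assert (0 <= norma / alpha * hnorm w)
      by (apply Rmult_le_pos; [apply div_nonneg |]; lra).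
    assert (hnorm d ^ 2 <= (norma / alpha * hnorm w) ^ 2).
    { rewrite Hdsq. apply (Rmult_le_reg_r (alpha ^ 2)); [nra |].
      field_simplify; lra. }
    nra. }
  cbv beta. rewrite Hd. eapply Rle_trans; [apply form_bound |].
  replace (norma ^ 2 / alpha * hnorm w * hnorm z)
    with (norma * (norma / alpha * hnorm w) * hnorm z) by (field; lra).
  apply Rmult_le_compat_r; [lra |]. apply Rmult_le_compat_l; lra.
Qed.

End SaddlePoint.

Theorem lemma1 (V Q : HilbertSpace) (A : V -> V -> Cx) (B : V -> Q -> Cx)
  (HA : bounded_op A) (HB : bounded_op B)
  (norma alpha : R)
  (Hnorma : is_lub (norm_a_set A) norma)
  (Halpha1 : is_glb (infsup_set1 (kerB B) A) alpha)
  (Halpha2 : is_glb (infsup_set2 (kerB B) A) alpha)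
  (Hpos : 0 < alpha) :
  let V0 := kerB B in
  let V1 := orth V0 in
  let c := sqrt (norma ^ 2 / alpha ^ 2 - 1) in
  (* || A10 A00^{-1} ||_{L(V0 dual, V1 dual)} <= c *)
  (forall f : V -> Cx, in_dual V0 f ->
     forall u : V, V0 u -> (forall v, V0 v -> A u v = f v) ->
     forall M, dual_le V0 f M -> dual_le V1 (A u) (c * M)) /\
  (* || A00^{-1} A01 ||_{L(V1, V0)} <= c *)
  (forall w : V, V1 w ->
     forall u : V, V0 u -> (forall v, V0 v -> A u v = A w v) ->
     hnorm u <= c * hnorm w) /\
  (* || A11 - A10 A00^{-1} A01 ||_{L(V1, V1 dual)} <= ||a||^2 / alpha *)
  (forall w : V, V1 w ->
     forall u : V, V0 u -> (forall v, V0 v -> A u v = A w v) ->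
     dual_le V1 (fun z => Csub (A w z) (A u z)) (norma ^ 2 / alpha * hnorm w)).
Proof.
  intros V0 V1 c. split; [| split].
  - intros f _ u Hu Heq M HM.
    exact (coupling_extension_bound V Q A B norma alpha HA Hnorma Halpha1 Hpos f u M Hu Heq HM).
  - intros w Hw u Hu Heq.
    exact (coupling_lift_bound V Q A B norma alpha HA Hnorma Halpha1 Halpha2 Hpos w u Hw Hu Heq).
  - intros w Hw u Hu Heq.
    exact (schur_complement_bound V Q A B norma alpha HA Hnorma Halpha1 Halpha2 Hpos
             w u Hw Hu Heq).
Qed.
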